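(* Let $(a_n),(b_n),(c_n),(\delta_n),(\xi_n)$ be sequences of real numbers such that $a_n,b_n,c_n,\xi_n\ge0$ for all $n$; $\lim_{n\to\infty}a_n=0$; $\sum_n b_n<\infty$; $\sum_n c_n=\infty$; the series $\sum_n\delta_n$ converges; and there exists $N_0$ such that for all $n>N_0$, $$\xi_{n+1}\le\max\big(a_n,\,(1+b_n)\xi_n+\delta_n-c_n\big).$$ Then $\lim_{n\to\infty}\xi_n=0$. *)

From Stdlib Require Import Reals.
From Coquelicot Require Export Coquelicot.

(* After finitely many steps, ξ is bounded by some M, so the recursion becomes
   ξ_{n+1} ≤ max(a_n, ξ_n + e_n) with drift e_n = M b_n + δ_n - c_n.  Unrolling
   such a recursion from time N, ξ_n is bounded either by ξ_N plus the drift
   accumulated since N, or by some a_j plus the drift accumulated since j.  The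
   drift accumulated over any late window is at most a small ε minus the mass
   of c in that window; as Σ c diverges, the first alternative eventually
   forces ξ_n ≤ ε, and the second gives ξ_n ≤ sup_{j ≥ N} a_j + ε.  The same
   unrolling, with the c-term discarded, also gives the initial bound M. *)
From Stdlib Require Import Reals Lra Lia.
From Coquelicot Require Import Coquelicot.
Open Scope R_scope.

(* [psum f n] is the sum of the first [n] terms, so [psum f n - psum f j] is
   the sum over the window [j, n). *)
Fixpoint psum (f : nat -> R) (n : nat) : R :=
  match n with O => 0 | S k => psum f k + f k end.

Lemma psum_succ (f : nat -> R) (n : nat) : psum f (S n) = sum_n f n.
Proof.
  induction n as [|n IH].
  - simpl. rewrite sum_O. lra.
  - change (psum f (S (S n))) with (psum f (S n) + f (S n)).
    now rewrite IH, sum_Sn.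
Qed.

Lemma psum_le (f : nat -> R) (j n : nat) :
  (forall k, 0 <= f k) -> (j <= n)%nat -> psum f j <= psum f n.
Proof.
  intros Hf Hjn. induction Hjn as [|n _ IH]; [lra|].
  simpl. specialize (Hf n). lra.
Qed.

Lemma psum_affine (M : R) (f g h : nat -> R) (n : nat) :
  psum (fun k => M * f k + g k - h k) n = M * psum f n + psum g n - psum h n.
Proof. induction n as [|n IH]; simpl; [ring|]. rewrite IH. ring. Qed.

Lemma ex_series_window_le (f : nat -> R) :
  ex_series f -> forall eps, 0 < eps ->
  exists N, forall j n, (N <= j)%nat -> (j <= n)%nat -> psum f n - psum f j <= eps.
Proof.
  intros [l Hl] eps Heps.
  apply (is_lim_seq_spec (sum_n f) l) in Hl.
  destruct (Hl (mkposreal (eps / 2) ltac:(lra))) as [N HN]; simpl in HN.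
  exists (S N). intros j n Hj Hjn.
  destruct j as [|j]; [lia|]. destruct n as [|n]; [lia|].
  rewrite !psum_succ.
  assert (Hj' := HN j ltac:(lia)). assert (Hn' := HN n ltac:(lia)).
  apply Rabs_lt_between in Hj'. apply Rabs_lt_between in Hn'. lra.
Qed.

Lemma is_lim_seq_psum_p_infty (f : nat -> R) :
  is_lim_seq (sum_n f) p_infty ->
  forall K, exists N, forall n, (N <= n)%nat -> K < psum f n.
Proof.
  intros Hf K. apply is_lim_seq_spec in Hf.
  destruct (Hf K) as [N HN].
  exists (S N). intros [|n] Hn; [lia|].
  rewrite psum_succ. apply HN. lia.
Qed.

Lemma is_lim_seq_0_eventually_le (u : nat -> R) :
  is_lim_seq u 0 -> forall eps, 0 < eps ->
  exists N, forall n, (N <= n)%nat -> u n <= eps.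
Proof.
  intros Hu eps Heps. apply is_lim_seq_spec in Hu.
  destruct (Hu (mkposreal eps Heps)) as [N HN]; simpl in HN.
  exists N. intros n Hn. specialize (HN n Hn).
  rewrite Rminus_0_r in HN. apply Rabs_lt_between in HN. lra.
Qed.

Section MaxRecursion.

Variables (u e : nat -> R) (A : R) (N : nat).

Definition unrolled_bound (n : nat) : Prop :=
  u n <= u N + (psum e n - psum e N) \/
  exists j, (N < j <= n)%nat /\ u n <= A + (psum e n - psum e j).

(* The step hypothesis may use the invariant itself, which is how a bound on
   [u] derived from the invariant can feed back into the recursion. *)
Lemma unrolled_bound_holds :
  (forall n, (N <= n)%nat -> unrolled_bound n ->
     u (S n) <= A \/ u (S n) <= u n + e n) ->
  forall n, (N <= n)%nat -> unrolled_bound n.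
Proof.
  intros Hstep n. induction n as [|n IH]; intros Hn; unfold unrolled_bound in *.
  - assert (N = 0%nat) by lia. subst. left. lra.
  - destruct (Nat.eq_dec N (S n)) as [<-|HNn]; [left; lra|].
    assert (Hn' : (N <= n)%nat) by lia.
    specialize (IH Hn').
    destruct (Hstep n Hn' IH) as [Hreset|Hgrow].
    + right. exists (S n). split; [lia|lra].
    + simpl psum.
      destruct IH as [H|[j [Hj H]]].
      * left. lra.
      * right. exists j. split; [lia|lra].
Qed.

Lemma unrolled_bound_le (B : R) (n : nat) :
  (forall j, (N < j <= n)%nat -> psum e n - psum e j <= B) ->
  unrolled_bound n -> u n <= Rmax (u N + (psum e n - psum e N)) (A + B).
Proof.
  intros Hwin [H|[j [Hj H]]].
  - eapply Rle_trans; [exact H|apply Rmax_l].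
  - eapply Rle_trans; [|apply Rmax_r]. specialize (Hwin j Hj). lra.
Qed.

End MaxRecursion.

Section Recursion.

Variables (a b c delta xi : nat -> R) (N0 : nat).
Hypothesis b_ge0 : forall n, 0 <= b n.
Hypothesis c_ge0 : forall n, 0 <= c n.
Hypothesis a_lim : is_lim_seq a 0.
Hypothesis b_series : ex_series b.
Hypothesis delta_series : ex_series delta.
Hypothesis xi_step : forall n, (N0 < n)%nat ->
  xi (S n) <= Rmax (a n) ((1 + b n) * xi n + delta n - c n).

Definition drift (M : R) (k : nat) : R := M * b k + delta k - c k.

Lemma xi_step_drift (M A' : R) (n : nat) :
  (N0 < n)%nat -> xi n <= M -> a n <= A' ->
  xi (S n) <= A' \/ xi (S n) <= xi n + drift M n.
Proof.
  intros Hn HM Ha. specialize (xi_step n Hn).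
  unfold Rmax in xi_step. destruct Rle_dec.
  - right. unfold drift.
    assert (b n * xi n <= b n * M) by (apply Rmult_le_compat_l; auto). lra.
  - left. lra.
Qed.

Lemma drift_window_le (M eb ed : R) (Nb Nd : nat) :
  0 <= M ->
  (forall j n, (Nb <= j)%nat -> (j <= n)%nat -> psum b n - psum b j <= eb) ->
  (forall j n, (Nd <= j)%nat -> (j <= n)%nat -> psum delta n - psum delta j <= ed) ->
  forall j n, (Nb + Nd <= j)%nat -> (j <= n)%nat ->
  psum (drift M) n - psum (drift M) j <= M * eb + ed - (psum c n - psum c j).
Proof.
  intros HM Hb Hd j n Hj Hjn. unfold drift. rewrite !psum_affine.
  assert (Hbw := Hb j n ltac:(lia) Hjn). assert (Hdw := Hd j n ltac:(lia) Hjn).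
  assert (M * (psum b n - psum b j) <= M * eb) by (apply Rmult_le_compat_l; lra).
  lra.
Qed.

Lemma xi_eventually_bounded :
  exists N1 M, (N0 < N1)%nat /\ 0 <= M /\ forall n, (N1 <= n)%nat -> xi n <= M.
Proof.
  destruct (is_lim_seq_0_eventually_le a a_lim 1 ltac:(lra)) as [Na Ha].
  destruct (ex_series_window_le b b_series (1 / 2) ltac:(lra)) as [Nb Hb].
  destruct (ex_series_window_le delta delta_series 1 ltac:(lra)) as [Nd Hd].
  set (N1 := S (N0 + Na + Nb + Nd)).
  set (C := Rmax (xi N1) 1).
  assert (HC1 : 1 <= C) by apply Rmax_r.
  assert (HC2 : xi N1 <= C) by apply Rmax_l.
  (* [M] solves [M = C + (M * (1/2) + 1)]: start plus worst accumulated drift. *)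
  set (M := 2 * (C + 1)).
  assert (Hwin : forall j n, (N1 <= j)%nat -> (j <= n)%nat ->
            psum (drift M) n - psum (drift M) j <= M * (1 / 2) + 1).
  { intros j n Hj Hjn.
    assert (Hcw : psum c j <= psum c n) by (apply psum_le; auto).
    assert (Hdrift := drift_window_le M _ _ Nb Nd ltac:(unfold M; lra) Hb Hd j n
                   ltac:(unfold N1 in Hj; lia) Hjn).
    lra. }
  assert (Hinv : forall n, (N1 <= n)%nat ->
            unrolled_bound xi (drift M) 1 N1 n -> xi n <= M).
  { intros n Hn Hu.
    assert (H := unrolled_bound_le xi (drift M) 1 N1 _ n
                   (fun j Hj => Hwin j n ltac:(lia) ltac:(lia)) Hu).
    assert (H0 := Hwin N1 n (le_n _) Hn).
    unfold Rmax at 1 in H. destruct Rle_dec; unfold M in *; lra. }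
  exists N1, M. split; [unfold N1; lia|]. split; [unfold M; lra|].
  intros n Hn. apply Hinv; auto.
  apply (unrolled_bound_holds xi (drift M) 1 N1); auto.
  intros m Hm Hu. apply xi_step_drift; auto.
  - unfold N1 in Hm. lia.
  - apply Ha. unfold N1 in Hm. lia.
Qed.

Hypothesis c_diverges : is_lim_seq (sum_n c) p_infty.

Lemma xi_eventually_small (N1 : nat) (M : R) :
  (N0 < N1)%nat -> 0 <= M -> (forall n, (N1 <= n)%nat -> xi n <= M) ->
  forall eps, 0 < eps -> exists N, forall n, (N <= n)%nat -> xi n < eps.
Proof.
  intros HN1 HM Hbound eps Heps.
  set (ep := eps / 3).
  assert (Hep : 0 < ep) by (unfold ep; lra).
  destruct (is_lim_seq_0_eventually_le a a_lim ep Hep) as [Na Ha].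
  destruct (ex_series_window_le b b_series (ep / (2 * M + 2))
              ltac:(apply Rdiv_lt_0_compat; lra)) as [Nb Hb].
  destruct (ex_series_window_le delta delta_series (ep / 2) ltac:(lra)) as [Nd Hd].
  set (N := (N1 + Na + Nb + Nd)%nat).
  assert (Hwin : forall j n, (N <= j)%nat -> (j <= n)%nat ->
            psum (drift M) n - psum (drift M) j <= ep - (psum c n - psum c j)).
  { intros j n Hj Hjn.
    assert (Hdrift := drift_window_le M _ _ Nb Nd HM Hb Hd j n
                   ltac:(unfold N in Hj; lia) Hjn).
    assert (M * (ep / (2 * M + 2)) = ep / 2 - ep / (2 * M + 2)) by (field; lra).
    assert (0 < ep / (2 * M + 2)) by (apply Rdiv_lt_0_compat; lra).
    lra. }
  destruct (is_lim_seq_psum_p_infty c c_diverges (psum c N + xi N)) as [Nc Hc].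
  exists (N + Nc)%nat. intros n Hn.
  assert (Hu : unrolled_bound xi (drift M) ep N n).
  { apply unrolled_bound_holds; [|lia].
    intros m Hm _. apply xi_step_drift.
    - unfold N in Hm. lia.
    - apply Hbound. unfold N in Hm. lia.
    - apply Ha. unfold N in Hm. lia. }
  assert (Hwin_ep : forall j, (N < j <= n)%nat ->
            psum (drift M) n - psum (drift M) j <= ep).
  { intros j Hj. assert (psum c j <= psum c n) by (apply psum_le; auto; lia).
    assert (Hw := Hwin j n ltac:(lia) ltac:(lia)). lra. }
  assert (H := unrolled_bound_le xi (drift M) ep N ep n Hwin_ep Hu).
  assert (H0 := Hwin N n (le_n _) ltac:(lia)).
  assert (Hcn := Hc n ltac:(lia)).
  unfold Rmax in H. destruct Rle_dec; unfold ep in *; lra.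
Qed.

End Recursion.

Theorem mainTheorem4 (a b c delta xi : nat -> R) :
  (forall n, 0 <= a n) -> (forall n, 0 <= b n) ->
  (forall n, 0 <= c n) -> (forall n, 0 <= xi n) ->
  is_lim_seq a 0 ->
  ex_series b ->
  is_lim_seq (sum_n c) p_infty ->
  ex_series delta ->
  (exists N0 : nat, forall n : nat, (N0 < n)%nat ->
     xi (S n) <= Rmax (a n) ((1 + b n) * xi n + delta n - c n)) ->
  is_lim_seq xi 0.
Proof.
  intros _ Hb Hc Hxi La Sb Lc Sd [N0 Hstep].
  destruct (xi_eventually_bounded a b c delta xi N0 Hb Hc La Sb Sd Hstep)
    as [N1 [M [HN1 [HM Hbound]]]].
  apply is_lim_seq_spec. intros eps.
  destruct (xi_eventually_small a b c delta xi N0 Hb Hc La Sb Sd Hstep Lc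
              N1 M HN1 HM Hbound eps (cond_pos eps)) as [N HN].
  exists N. intros n Hn.
  rewrite Rminus_0_r, Rabs_pos_eq by apply Hxi.
  now apply HN.
Qed.
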